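(* There exist finite languages $L_1, L_2, L_3, L_4$ (over finite alphabets) such that $\mathbb{ROGI}^*(L_1, L_2)$ and $\mathbb{LOGI}^*(L_3, L_4)$ are not regular. (For instance, over $\{\$, a, b, c, d\}$ with $L_1 = \{acdb, cabd\}$, $L_2 = \{a\$b\}$: $\mathbb{ROGI}^*(L_1,L_2) = \{(ca)^i \$ (bd)^i \mid i \geq 0\} \cup \{a (ca)^i \$ (bd)^i b \mid i \geq 0\}$.)
   Context: Outfix-guided insertion: $x \leftarrow y = \{ x_1 u z v x_2 \mid x = x_1 u v x_2,\ y = u z v,\ u \neq \varepsilon,\ v \neq \varepsilon \}$, extended to languages by union over all pairs. Right one-sided iteration: $\mathbb{ROGI}^{(0)}(L_1,L_2) = L_2$, $\mathbb{ROGI}^{(i+1)}(L_1,L_2) = L_1 \leftarrow \mathbb{ROGI}^{(i)}(L_1,L_2)$, $\mathbb{ROGI}^*(L_1,L_2) = \bigcup_{i\geq 0}\mathbb{ROGI}^{(i)}(L_1,L_2)$. Left one-sided iteration: $\mathbb{LOGI}^{(0)}(L_1,L_2) = L_1$, $\mathbb{LOGI}^{(i+1)}(L_1,L_2) = \mathbb{LOGI}^{(i)}(L_1,L_2) \leftarrow L_2$, $\mathbb{LOGI}^*(L_1,L_2) = \bigcup_{i\geq 0}\mathbb{LOGI}^{(i)}(L_1,L_2)$. *)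

From mathcomp Require Import all_boot.
Set Implicit Arguments. Unset Strict Implicit. Unset Printing Implicit Defensive.

Definition lang (T : finType) := seq T -> Prop.

Definition finlang (T : finType) (s : seq (seq T)) : lang T := fun w => w \in s.

Definition og_ins (T : finType) (x y w : seq T) : Prop :=
  exists x1 u z v x2 : seq T,
    [/\ x = x1 ++ u ++ v ++ x2, y = u ++ z ++ v, u <> [::], v <> [::]
      & w = x1 ++ u ++ z ++ v ++ x2].

Definition og_ins_lang (T : finType) (L1 L2 : lang T) : lang T :=
  fun w => exists x y, [/\ L1 x, L2 y & og_ins x y w].

Fixpoint ROGI_n (T : finType) (L1 L2 : lang T) (i : nat) : lang T :=
  match i with
  | 0 => L2
  | i'.+1 => og_ins_lang L1 (ROGI_n L1 L2 i')
  end.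

Definition ROGI_star (T : finType) (L1 L2 : lang T) : lang T :=
  fun w => exists i, ROGI_n L1 L2 i w.

Fixpoint LOGI_n (T : finType) (L1 L2 : lang T) (i : nat) : lang T :=
  match i with
  | 0 => L1
  | i'.+1 => og_ins_lang (LOGI_n L1 L2 i') L2
  end.

Definition LOGI_star (T : finType) (L1 L2 : lang T) : lang T :=
  fun w => exists i, LOGI_n L1 L2 i w.

Definition regular (T : finType) (L : lang T) : Prop :=
  exists (Q : finType) (q0 : Q) (delta : Q -> T -> Q) (F : pred Q),
    forall w, L w <-> F (foldl delta q0 w).

(* Over {a, b, c, d}, take ROGI*({acdb, cabd}, {cd}) and LOGI*({ab}, {cabd, acdb}).
   Both contain the words (ca)^n cd (bd)^n, respectively (ac)^n ab (db)^n, obtained by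
   two insertions per step.  Conversely, every word of these languages has as many
   c's as d's: this is an invariant of the insertions once it is strengthened by a
   local condition (first and last letters (c, d) or (a, b) for ROGI; no factor ad
   or cb for LOGI).  Hence the prefixes (ca)^j, resp. (ac)^j, are pairwise
   separated by the corresponding suffixes, and no DFA accepts either language. *)
From mathcomp Require Import all_boot.
From mathcomp Require Import zify.

Set Implicit Arguments. Unset Strict Implicit. Unset Printing Implicit Defensive.

Section Splits.

Variable T : eqType.

Definition splits (s : seq T) : seq (seq T * seq T) :=
  [seq (take k s, drop k s) | k <- iota 0 (size s).+1].

Definition all_splits (P : seq T -> seq T -> bool) (s : seq T) : bool :=
  all (fun p => P p.1 p.2) (splits s).

Lemma mem_splits s1 s2 : (s1, s2) \in splits (s1 ++ s2).
Proof.
apply/mapP; exists (size s1); last by rewrite take_size_cat // drop_size_cat.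
by rewrite mem_iota size_cat /=; lia.
Qed.

Lemma all_splitsP (P : seq T -> seq T -> bool) s :
  reflect (forall s1 s2, s = s1 ++ s2 -> P s1 s2) (all_splits P s).
Proof.
apply: (iffP allP) => [P_splits s1 s2 def_s | P_cats [s1 s2] /mapP[k _ [-> ->]]].
  by apply: (P_splits (s1, s2)); rewrite def_s mem_splits.
by apply: P_cats; rewrite cat_take_drop.
Qed.

Lemma head_cat (x : T) s1 s2 : head x (s1 ++ s2) = head (head x s2) s1.
Proof. by case: s1. Qed.

Lemma head_cat_nonnil (x : T) s1 s2 : s1 != [::] -> head x (s1 ++ s2) = head x s1.
Proof. by case: s1. Qed.

Lemma last_cat_nonnil (x : T) s1 s2 : s2 != [::] -> last x (s1 ++ s2) = last x s2.
Proof. by rewrite last_cat; case: s2. Qed.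

Lemma sorted_cat_replace (e : rel T) a b h m m' :
  last h m = last h m' -> path e h m' ->
  sorted e (a ++ h :: m ++ b) -> sorted e (a ++ h :: m' ++ b).
Proof.
move=> eq_last hm'; rewrite !sorted_cat_cons !cat_path -eq_last hm'.
by case/and3P=> -> _ ->.
Qed.

End Splits.

Lemma finType_nat_collision (Q : finType) (f : nat -> Q) :
  exists i j, i < j /\ f i = f j.
Proof.
pose g (i : 'I_#|Q|.+1) := f i.
have /injectivePn[i [j neq_ij eq_fij]] : ~~ injectiveb g.
  by apply/negP => /injectiveP/leq_card; rewrite card_ord ltnn.
case: (ltngtP i j) => [lt_ij | lt_ji | eq_ij]; first by exists i, j.
  by exists j, i.
by move: neq_ij; rewrite -val_eqE /= eq_ij eqxx.
Qed.

(* If the prefixes p i are pairwise separated by the suffixes s i, two of them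
   reach the same state of any candidate DFA, which then errs on p j ++ s i. *)
Lemma not_regular_fooling (T : finType) (L : lang T) (p s : nat -> seq T) :
  (forall i, L (p i ++ s i)) -> (forall i j, i < j -> ~ L (p j ++ s i)) ->
  ~ regular L.
Proof.
move=> Lps notLps [Q [q0 [delta [F accF]]]].
have [i [j [lt_ij eq_ij]]] := finType_nat_collision (fun n => foldl delta q0 (p n)).
apply: (notLps i j lt_ij); apply/accF.
by rewrite foldl_cat -eq_ij -foldl_cat; apply/accF.
Qed.

Section Invariants.

Variables (T : finType) (L1 L2 P : lang T).

Lemma ROGI_star_inv :
  (forall y, L2 y -> P y) ->
  (forall x y w, L1 x -> P y -> og_ins x y w -> P w) ->
  forall w, ROGI_star L1 L2 w -> P w.
Proof.
move=> P_L2 P_ins w [n]; elim: n w => [|n IHn] w /=; first exact: P_L2.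
by case=> x [y [L1x /IHn Py ins]]; exact: P_ins L1x Py ins.
Qed.

Lemma LOGI_star_inv :
  (forall x, L1 x -> P x) ->
  (forall x y w, P x -> L2 y -> og_ins x y w -> P w) ->
  forall w, LOGI_star L1 L2 w -> P w.
Proof.
move=> P_L1 P_ins w [n]; elim: n w => [|n IHn] w /=; first exact: P_L1.
by case=> x [y [/IHn Px L2y ins]]; exact: P_ins Px L2y ins.
Qed.

End Invariants.

Definition letter := 'I_4.
Definition la : letter := @Ordinal 4 0 isT.
Definition lb : letter := @Ordinal 4 1 isT.
Definition lc : letter := @Ordinal 4 2 isT.
Definition ld : letter := @Ordinal 4 3 isT.

Definition balanced (w : seq letter) : bool := count_mem lc w == count_mem ld w.

Lemma balanced_insert (s1 z s2 : seq letter) :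
  balanced (s1 ++ s2) -> balanced z -> balanced (s1 ++ z ++ s2).
Proof. by rewrite /balanced !count_cat => /eqP ? /eqP ?; apply/eqP; lia. Qed.

Definition rogi_hosts : seq (seq letter) :=
  [:: [:: la; lc; ld; lb]; [:: lc; la; lb; ld]].
Definition rogi_seed : seq (seq letter) := [:: [:: lc; ld]].

Definition rogi_ends (h l : letter) : bool := (h, l) \in [:: (lc, ld); (la, lb)].

Definition rogi_inv (w : seq letter) : bool :=
  balanced w && rogi_ends (head la w) (last la w).

Definition rogi_check (x1 u v x2 : seq letter) : bool :=
  (u != [::]) ==> (v != [::]) ==> rogi_ends (head la u) (last la v) ==>
  balanced (x1 ++ x2) && rogi_ends (head (head la u) x1) (last (last la v) x2).

(* The invariant step depends only on the factorization x = x1 u v x2 of the host,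
   and a host from rogi_hosts has finitely many. *)
Lemma rogi_checks : all (all_splits (fun x1 r =>
  all_splits (fun u r' => all_splits (rogi_check x1 u) r') r)) rogi_hosts.
Proof. by vm_compute. Qed.

Lemma rogi_inv_ins x y w :
  x \in rogi_hosts -> rogi_inv y -> og_ins x y w -> rogi_inv w.
Proof.
move=> hostx /andP[bal_y ends_y] [x1 [u [z [v [x2 [def_x def_y nz_u nz_v ->]]]]]].
subst x y; move/eqP: nz_u => nz_u; move/eqP: nz_v => nz_v.
have /implyP/(_ nz_u)/implyP/(_ nz_v)/implyP : rogi_check x1 u v x2.
  move: (allP rogi_checks _ hostx) => /all_splitsP/(_ x1 _ erefl).
  by move=> /all_splitsP/(_ u _ erefl)/all_splitsP/(_ v x2 erefl).
rewrite head_cat_nonnil // catA last_cat_nonnil // in ends_y.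
case/(_ ends_y)/andP=> bal_x ends_w; apply/andP; split.
  have -> : x1 ++ u ++ z ++ v ++ x2 = x1 ++ (u ++ z ++ v) ++ x2 by rewrite -!catA.
  exact: balanced_insert.
by rewrite head_cat head_cat_nonnil // !catA last_cat last_cat_nonnil.
Qed.

Fixpoint rogi_pre (n : nat) : seq letter :=
  if n is m.+1 then lc :: la :: rogi_pre m else [::].
Fixpoint rogi_suf (n : nat) : seq letter :=
  if n is m.+1 then rogi_suf m ++ [:: lb; ld] else [:: lc; ld].

Lemma rogi_word_in n :
  ROGI_n (finlang rogi_hosts) (finlang rogi_seed) n.*2 (rogi_pre n ++ rogi_suf n).
Proof.
elim: n => [|n IHn]; first by rewrite /= /finlang inE.
have [z def_w] : exists z, rogi_pre n ++ rogi_suf n = [:: lc] ++ z ++ [:: ld].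
  case: n {IHn} => [|n]; first by exists [::].
  by exists (la :: (rogi_pre n ++ rogi_suf n) ++ [:: lb]); rewrite /= -!catA.
rewrite doubleS /=.
exists [:: lc; la; lb; ld], ([:: la] ++ (rogi_pre n ++ rogi_suf n) ++ [:: lb]).
split=> //.
- exists [:: la; lc; ld; lb], (rogi_pre n ++ rogi_suf n); split => //.
  exists [:: la], [:: lc], z, [:: ld], [:: lb]; split => //.
  by rewrite def_w /= -!catA.
- exists [:: lc], [:: la], (rogi_pre n ++ rogi_suf n), [:: lb], [:: ld]; split => //.
  by rewrite /= -!catA.
Qed.

Lemma balanced_rogi_word i j : balanced (rogi_pre j ++ rogi_suf i) = (j == i).
Proof.
have count_pre n : count_mem lc (rogi_pre n) = n /\ count_mem ld (rogi_pre n) = 0.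
  by elim: n => //= n [-> ->].
have count_suf n : count_mem lc (rogi_suf n) = 1 /\ count_mem ld (rogi_suf n) = n.+1.
  by elim: n => //= n [IHc IHd]; rewrite !count_cat IHc IHd /=; lia.
rewrite /balanced !count_cat.
have [-> ->] := count_pre j; have [-> ->] := count_suf i.
by rewrite add0n addn1 eqSS.
Qed.

Lemma ROGI_not_regular :
  ~ regular (ROGI_star (finlang rogi_hosts) (finlang rogi_seed)).
Proof.
apply: (not_regular_fooling (p := rogi_pre) (s := rogi_suf)).
  by move=> i; exists i.*2; apply: rogi_word_in.
move=> i j lt_ij w_in.
suff : rogi_inv (rogi_pre j ++ rogi_suf i).
  by rewrite /rogi_inv balanced_rogi_word gtn_eqF.
apply: (ROGI_star_inv (P := rogi_inv) _ _ w_in) => [y | x y w].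
  by rewrite /finlang inE => /eqP ->.
exact: rogi_inv_ins.
Qed.

Definition logi_seed : seq (seq letter) := [:: [:: la; lb]].
Definition logi_inserts : seq (seq letter) :=
  [:: [:: lc; la; lb; ld]; [:: la; lc; ld; lb]].

Definition logi_adj : rel letter := fun p q => (p, q) \notin [:: (la, ld); (lc, lb)].

Definition logi_inv (w : seq letter) : bool := sorted logi_adj w && balanced w.

Definition logi_check (u z v : seq letter) : bool :=
  (u != [::]) ==> (v != [::]) ==> sorted logi_adj (u ++ v) ==> balanced z.

(* Likewise, only the factorization y = u z v of the inserted word matters. *)
Lemma logi_checks : all (fun y =>
    sorted logi_adj y && all_splits (fun u r => all_splits (logi_check u) r) y)
  logi_inserts.
Proof. by vm_compute. Qed.

Lemma logi_inv_ins x y w :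
  logi_inv x -> y \in logi_inserts -> og_ins x y w -> logi_inv w.
Proof.
move=> /andP[sorted_x bal_x] insy [x1 [u [z [v [x2 [def_x def_y nz_u nz_v ->]]]]]].
subst x y; move/eqP: nz_u => nz_u; move/eqP: nz_v => nz_v.
have /andP[sorted_y checks_y] := allP logi_checks _ insy.
have sorted_uv : sorted logi_adj (u ++ v).
  by apply: infix_sorted sorted_x; rewrite (catA u) infix_infix.
have bal_z : balanced z.
  move/all_splitsP/(_ u _ erefl)/all_splitsP/(_ z v erefl): checks_y.
  by rewrite /logi_check nz_u nz_v sorted_uv.
apply/andP; split; last by rewrite catA balanced_insert // -catA.
case: u nz_u sorted_x sorted_y {insy bal_x checks_y sorted_uv} => // h u _.
move=> sorted_x sorted_y.
have reshape s : x1 ++ (h :: u) ++ s ++ v ++ x2 = x1 ++ h :: (u ++ s ++ v) ++ x2.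
  by rewrite -!catA.
rewrite reshape; rewrite (reshape [::]) cat0s in sorted_x.
apply: (sorted_cat_replace (m := u ++ v) (m' := u ++ z ++ v)) sorted_y sorted_x.
by rewrite catA !last_cat_nonnil.
Qed.

Fixpoint logi_pre (n : nat) : seq letter :=
  if n is m.+1 then logi_pre m ++ [:: la; lc] else [::].
Fixpoint logi_tail (n : nat) : seq letter :=
  if n is m.+1 then ld :: lb :: logi_tail m else [::].

Lemma logi_word_in n :
  LOGI_n (finlang logi_seed) (finlang logi_inserts) n.*2
    (logi_pre n ++ [:: la; lb] ++ logi_tail n).
Proof.
elim: n => [|n IHn]; first by rewrite /= /finlang inE.
rewrite doubleS /=.
exists (logi_pre n ++ [:: la; lc; ld; lb] ++ logi_tail n), [:: lc; la; lb; ld].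
split=> //.
- exists (logi_pre n ++ [:: la; lb] ++ logi_tail n), [:: la; lc; ld; lb]; split => //.
  by exists (logi_pre n), [:: la], [:: lc; ld], [:: lb], (logi_tail n).
- exists (logi_pre n ++ [:: la]), [:: lc], [:: la; lb], [:: ld].
  exists ([:: lb] ++ logi_tail n).
  by split => //; rewrite -!catA.
Qed.

Lemma balanced_logi_word i j :
  balanced (logi_pre j ++ [:: la; lb] ++ logi_tail i) = (j == i).
Proof.
have count_pre n : count_mem lc (logi_pre n) = n /\ count_mem ld (logi_pre n) = 0.
  by elim: n => //= n [IHc IHd]; rewrite !count_cat IHc IHd /=; lia.
have count_tail n : count_mem lc (logi_tail n) = 0 /\ count_mem ld (logi_tail n) = n.
  by elim: n => //= n [-> ->].
rewrite /balanced !count_cat.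
have [-> ->] := count_pre j; have [-> ->] := count_tail i.
by rewrite /= !(addn0, add0n).
Qed.

Lemma LOGI_not_regular :
  ~ regular (LOGI_star (finlang logi_seed) (finlang logi_inserts)).
Proof.
apply: (not_regular_fooling (p := logi_pre) (s := fun i => [:: la; lb] ++ logi_tail i)).
  by move=> i; exists i.*2; apply: logi_word_in.
move=> i j lt_ij w_in.
suff : logi_inv (logi_pre j ++ [:: la; lb] ++ logi_tail i).
  by rewrite /logi_inv balanced_logi_word gtn_eqF ?andbF.
apply: (LOGI_star_inv (P := logi_inv) _ _ w_in) => [x | x y w].
  by rewrite /finlang inE => /eqP ->.
exact: logi_inv_ins.
Qed.

Theorem proposition4p12 :
  (exists (T : finType) (L1 L2 : seq (seq T)),
      ~ regular (ROGI_star (finlang L1) (finlang L2))) /\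
  (exists (T : finType) (L3 L4 : seq (seq T)),
      ~ regular (LOGI_star (finlang L3) (finlang L4))).
Proof.
split; first by exists letter, rogi_hosts, rogi_seed; exact: ROGI_not_regular.
by exists letter, logi_seed, logi_inserts; exact: LOGI_not_regular.
Qed.
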